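(* Let $0\le\alpha<n$, $m$ a nonnegative integer, $0<\eta\le1$, $0<\delta<\min\{\eta,(n-\alpha)/m\}$, $1\le r\le\infty$, $\tilde\alpha=m\delta+\alpha$, $\tilde\delta\le\delta$. A pair of weights $(w,v)$ belongs to $\mathbb{H}(r,\tilde\alpha,\tilde\delta)$ if and only if there is $C$ such that the two inequalities $$|B|^{\frac{\tilde\alpha-\tilde\delta}{n}-\frac1r}\Big(\frac{1}{|B|}\int_Bv^{r'}(y)\,dy\Big)^{1/r'}\le C\frac{w(B)}{|B|}\quad\text{(local)}$$ and $$|B|^{\frac{\delta-\tilde\delta}{n}}\Big(\int_{\mathbb{R}^n\setminus B}\frac{v^{r'}(y)}{|x_B-y|^{r'(n-\tilde\alpha+\delta)}}dy\Big)^{1/r'}\le C\frac{w(B)}{|B|}\quad\text{(global)}$$ hold simultaneously for every ball $B\subset\mathbb{R}^n$ with center $x_B$.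
   Context: A weight is a nonnegative locally integrable function; $w(B)=\int_Bw$; $r'$ is the conjugate exponent, and when $r'=\infty$ the $L^{r'}$ averages/integrals are read as $L^\infty$ norms. $(w,v)\in\mathbb{H}(r,\tilde\alpha,\tilde\delta)$ means that for some $C$ and every ball $B$: if $1<r\le\infty$, $|B|^{(\delta-\tilde\delta)/n}\big(\int\frac{v^{r'}(y)}{(|B|^{1/n}+|x_B-y|)^{r'(n-\tilde\alpha+\delta)}}dy\big)^{1/r'}\le C\frac{w(B)}{|B|}$; if $r=1$, $|B|^{(\delta-\tilde\delta)/n}\big\|\frac{v(\cdot)}{(|B|^{1/n}+|x_B-\cdot|)^{n-\tilde\alpha+\delta}}\big\|_\infty\le C\frac{w(B)}{|B|}$. If $m=0$, $(n-\alpha)/m$ is read as $+\infty$. *)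

From HB Require Import structures.
From mathcomp Require Import all_boot all_order all_algebra.
From mathcomp Require Import all_classical all_reals all_analysis.
Set Implicit Arguments. Unset Strict Implicit. Unset Printing Implicit Defensive.
Import Order.TTheory GRing.Theory Num.Theory.
Import numFieldNormedType.Exports.
Local Open Scope classical_set_scope.
Local Open Scope ring_scope.

(* R^n, as row vectors 'rV[R]_n, equipped with its Borel sigma-algebra
   (generated by the open sets of the product = Euclidean topology). *)
Definition Rn (R : realType) (n : nat) := g_sigma_algebraType (@open 'rV[R]_n).

Section defs.
Context {R : realType} {n : nat}.

Definition enorm (x : 'rV[R]_n) : R := Num.sqrt (\sum_(i < n) (x ord0 i) ^+ 2).

Definition eball (x : 'rV[R]_n) (rho : R) : set (Rn R n) :=
  [set y : 'rV[R]_n | enorm (y - x) < rho].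

Definition box (a b : 'rV[R]_n) : set (Rn R n) :=
  [set y : 'rV[R]_n | forall i, a ord0 i <= y ord0 i < b ord0 i].

(* mu is n-dimensional Lebesgue measure (on Borel sets): it gives every box
   its volume (this determines the measure uniquely on Borel sets). *)
Definition is_lebesgue (mu : {measure set (Rn R n) -> \bar R}) : Prop :=
  forall a b : 'rV[R]_n, (forall i, a ord0 i <= b ord0 i) ->
    mu (box a b) = (\prod_(i < n) (b ord0 i - a ord0 i))%:E.

Definition weight (mu : {measure set (Rn R n) -> \bar R}) (w : Rn R n -> R) : Prop :=
  (forall x, 0 <= w x) /\ measurable_fun setT w /\
  (forall (x : 'rV[R]_n) (rho : R), 0 < rho -> mu.-integrable (eball x rho) (EFin \o w)).

Definition vol (mu : {measure set (Rn R n) -> \bar R}) (B : set (Rn R n)) : R := fine (mu B).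

Definition wavg (mu : {measure set (Rn R n) -> \bar R}) (w : Rn R n -> R) (B : set (Rn R n)) : \bar R :=
  ((\int[mu]_(y in B) (w y)%:E) * ((vol mu B)^-1)%:E)%E.

End defs.

Definition conj_exp {R : realType} (r : \bar R) : \bar R :=
  match r with
  | x%:E => if x == 1 then +oo%E else (x / (x - 1))%:E
  | +oo%E => 1%E
  | -oo%E => 0%E (* junk, never used since r >= 1 *)
  end.

Definition inv_exp {R : realType} (p : \bar R) : R :=
  match p with
  | x%:E => x^-1
  | _ => 0
  end.

(* (n - alpha)/m, read as +oo when m = 0 *)
Definition ratio_bound {R : realType} (n : nat) (alpha : R) (m : nat) : \bar R :=
  if m == 0%N then +oo%E else ((n%:R - alpha) / m%:R)%:E.

Section Hclass.
Context {R : realType} {n : nat}.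
Variable mu : {measure set (Rn R n) -> \bar R}.

(* For r > 1 the L^{r'} norm is (int v^{r'} / (...)^{r'(n-alt+delta)})^{1/r'};
   for r = 1 (r' = +oo) it is the (essential) sup norm, as in the paper. *)
Definition inH (r : \bar R) (alt dt delta : R) (w v : Rn R n -> R) : Prop :=
  exists C : R, forall (xB : 'rV[R]_n) (rho : R), 0 < rho ->
    let B := eball xB rho in
    ((vol mu B `^ ((delta - dt) / n%:R))%:E *
      Lnorm mu (conj_exp r)
        (fun y : Rn R n => (v y / (vol mu B `^ (n%:R^-1) + enorm ((y : 'rV[R]_n) - xB))
                                  `^ (n%:R - alt + delta))%:E)
     <= C%:E * wavg mu w B)%E.

(* local condition:
   |B|^((alt-dt)/n - 1/r) (1/|B| int_B v^{r'})^{1/r'} <= C w(B)/|B|,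
   where (1/|B| int_B v^{r'})^{1/r'} = |B|^{-1/r'} ||v 1_B||_{L^{r'}}, read as the
   L^oo norm of v on B when r' = +oo. *)
Definition local_cond (r : \bar R) (alt dt : R) (w v : Rn R n -> R) (C : R)
    (xB : 'rV[R]_n) (rho : R) : Prop :=
  let B := eball xB rho in
  ((vol mu B `^ ((alt - dt) / n%:R - inv_exp r))%:E *
    ((vol mu B `^ (- inv_exp (conj_exp r)))%:E *
      Lnorm mu (conj_exp r) (fun y : Rn R n => (\1_B y * v y)%:E))
   <= C%:E * wavg mu w B)%E.

(* global condition:
   |B|^((delta-dt)/n) (int_{R^n \ B} v^{r'}(y)/|xB - y|^{r'(n-alt+delta)} dy)^{1/r'} <= C w(B)/|B|,
   read with the L^oo norm on R^n \ B when r' = +oo. *)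
Definition global_cond (r : \bar R) (alt dt delta : R) (w v : Rn R n -> R) (C : R)
    (xB : 'rV[R]_n) (rho : R) : Prop :=
  let B := eball xB rho in
  ((vol mu B `^ ((delta - dt) / n%:R))%:E *
    Lnorm mu (conj_exp r)
      (fun y : Rn R n => (\1_(~` B) y * (v y / enorm (xB - (y : 'rV[R]_n)) `^ (n%:R - alt + delta)))%:E)
   <= C%:E * wavg mu w B)%E.

End Hclass.

(* Let B = B(x_B, rho), s = |B|^(1/n) and e = n - alpha~ + delta >= 0 (this is where
   delta < (n - alpha)/m is used).  Comparing B with cubes gives rho/n <= s <= 2 rho, so
   s + |x_B - y| <= (1 + n) s on B and s + |x_B - y| <= 3 |x_B - y| off B.  Hence the
   L^{r'} norm of v(y) (s + |x_B - y|)^(-e) dominates (up to the factors (1 + n)^e and 3^e)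
   both s^(-e) ||v 1_B||_{r'} and ||v |x_B - .|^(-e) 1_{B^c}||_{r'}, and by Minkowski it is
   dominated by their sum.  Since 1/r + 1/r' = 1, the powers of |B| in the local condition
   combine to |B|^((delta - dt)/n) s^(-e), so the two conditions together are equivalent
   to membership in H(r, alpha~, dt). *)
From HB Require Import structures.
From mathcomp Require Import all_boot all_order all_algebra.
From mathcomp Require Import all_classical all_reals all_analysis.
From mathcomp Require Import measurable_realfun ess_sup_inf lra ring.
Import Order.TTheory GRing.Theory Num.Theory.
Import numFieldNormedType.Exports.
Local Open Scope classical_set_scope.
Local Open Scope ring_scope.

Section Lnorm_monotone.
Context {d} {T : measurableType d} {R : realType} (mu : {measure set T -> \bar R}).
Variable p : \bar R.
Hypothesis p1 : (1 <= p)%E.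
Local Open Scope ereal_scope.

Let Lnorm_integrandE (f : T -> R) (q : R) :
  \int[mu]_x `|(EFin \o f) x| `^ q = \int[mu]_x (`|f x| `^ q)%:E.
Proof. by apply: eq_integral => x _; rewrite /= -poweR_EFin. Qed.

Let measurable_abs_powR (f : T -> R) (q : R) : measurable_fun setT f ->
  measurable_fun setT (fun x => `|f x| `^ q)%R.
Proof. by move=> mf; apply/(measurableT_comp (measurable_powR _))/measurableT_comp. Qed.

Lemma le_Lnorm (f g : T -> R) :
  measurable_fun setT f -> measurable_fun setT g ->
  (forall x, `|f x| <= `|g x|)%R ->
  Lnorm mu p (EFin \o f) <= Lnorm mu p (EFin \o g).
Proof.
move: p1; case: p => [q| |] // q1 mf mg fg; rewrite unlock /Lnorm.
- have q0 : (0 < q)%R by rewrite lee_fin in q1; exact: lt_le_trans q1.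
  rewrite !Lnorm_integrandE; apply: gt0_ler_poweR.
  + by rewrite invr_ge0 ltW.
  + by rewrite in_itv /= leey andbT integral_ge0 // => x _; rewrite lee_fin powR_ge0.
  + by rewrite in_itv /= leey andbT integral_ge0 // => x _; rewrite lee_fin powR_ge0.
  apply: ge0_le_integral => //; try exact/measurable_EFinP/measurable_abs_powR.
  by move=> x _ /=; rewrite lee_fin ge0_ler_powR // ?nnegrE // ltW.
- by case: ifPn => // _; apply/le_ess_sup/nearW => x /=; rewrite lee_fin.
Qed.

Lemma ge0_LnormZl (f : T -> R) (c : R) : (0 <= c)%R -> measurable_fun setT f ->
  Lnorm mu p (EFin \o (fun x => c * f x)%R) = c%:E * Lnorm mu p (EFin \o f).
Proof.
move: p1; case: p => [q| |] // q1 c0 mf; rewrite unlock /Lnorm.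
- have q0 : (0 < q)%R by rewrite lee_fin in q1; exact: lt_le_trans q1.
  rewrite !Lnorm_integrandE; under eq_integral do rewrite normrM powRM // EFinM.
  rewrite ge0_integralZl_EFin //; last exact/measurable_EFinP/measurable_abs_powR.
  rewrite poweRM ?lee_fin ?powR_ge0 //; last first.
    by rewrite integral_ge0 // => x _; rewrite lee_fin powR_ge0.
  by rewrite poweR_EFin -powRrM mulfV ?gt_eqF // powRr1 ?normr_ge0 // ger0_norm.
- case: ifPn => mu0; last by rewrite mule0.
  rewrite -(ess_supZl _ mu0 c0); apply/eq_ess_sup/nearW => x /=.
  by rewrite normrM ger0_norm.
Qed.

End Lnorm_monotone.

Section Euclidean.
Context {R : realType} {n : nat}.
Implicit Types (x y z : 'rV[R]_n) (rho c : R).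

Lemma measurable_coord (i : 'I_n) :
  measurable_fun setT (fun y : Rn R n => (y : 'rV[R]_n) ord0 i).
Proof.
apply: (measurability _ (RGenOpens.measurableE R)).
move=> _ [_ [a [b ->] <-]]; apply: sub_sigma_algebra.
rewrite setTI; move: (@coord_continuous R 1 n ord0 i) => /continuousP; apply.
exact: interval_open.
Qed.

Lemma measurable_enorm_dist x :
  measurable_fun setT (fun y : Rn R n => enorm ((y : 'rV[R]_n) - x)).
Proof.
apply: (measurableT_comp (continuous_measurable_fun (@sqrt_continuous R))).
under eq_fun do under eq_bigr do rewrite !mxE.
apply: measurable_sum => i; apply/measurable_funX/measurable_funB => //.
exact: measurable_coord.
Qed.

Lemma measurable_eball x rho : measurable (eball x rho : set (Rn R n)).
Proof.
have := measurable_enorm_dist x measurableT _ (measurable_itv `]-oo, rho[).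
by rewrite setTI; congr measurable; apply/seteqP; split => y /=; rewrite in_itv.
Qed.

Lemma measurable_box (a b : 'rV[R]_n) : measurable (box a b : set (Rn R n)).
Proof.
have -> : box a b = \bigcap_(i in [set: 'I_n])
    ((fun y : Rn R n => (y : 'rV[R]_n) ord0 i) @^-1` `[a ord0 i, b ord0 i[).
  apply/seteqP; split => [y yab i _|y yab i] /=; first by rewrite in_itv /= yab.
  by have := yab i I; rewrite /= in_itv.
apply: fin_bigcap_measurable => [|i _]; first exact: finite_finset.
by have := measurable_coord i measurableT _ (measurable_itv `[a ord0 i, b ord0 i[); rewrite setTI.
Qed.

Lemma enorm_ge0 z : 0 <= enorm z.
Proof. exact: sqrtr_ge0. Qed.

Lemma enorm_distC x y : enorm (x - y) = enorm (y - x).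
Proof.
by rewrite /enorm -opprB; congr Num.sqrt; apply: eq_bigr => i _; rewrite mxE sqrrN.
Qed.

Lemma coord_le_enorm z i : `|z ord0 i| <= enorm z.
Proof.
rewrite /enorm -sqrtr_sqr ler_sqrt ?sumr_ge0 // => [|j _]; last exact: sqr_ge0.
by rewrite (bigD1 i) //= lerDl sumr_ge0 // => j _; exact: sqr_ge0.
Qed.

Lemma enorm_lt_coord z c rho : 0 < rho ->
  (forall i, `|z ord0 i| <= c) -> n%:R * c ^+ 2 < rho ^+ 2 -> enorm z < rho.
Proof.
move=> rho0 zc nc; rewrite /enorm -(ger0_norm (ltW rho0)) -sqrtr_sqr ltr_sqrt ?exprn_gt0 //.
apply: le_lt_trans nc; rewrite mulr_natl.
have -> : c ^+ 2 *+ n = \sum_(i < n) c ^+ 2 by rewrite sumr_const card_ord.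
apply: ler_sum => i _; have := zc i; have := normr_ge0 (z ord0 i).
rewrite -real_normK ?num_real //; nra.
Qed.

Lemma lebesgue_cube (mu : {measure set (Rn R n) -> \bar R}) x c :
  is_lebesgue mu -> 0 <= c ->
  mu (box (x - const_mx c) (x + const_mx c)) = ((2 * c) ^+ n)%:E.
Proof.
move=> hL c0; rewrite hL => [|i]; last by rewrite !mxE; lra.
by rewrite (eq_bigr (fun=> 2 * c)) ?prodr_const ?card_ord // => i _; rewrite !mxE; lra.
Qed.

Lemma eball_sub_cube x rho : eball x rho `<=` box (x - const_mx rho) (x + const_mx rho).
Proof.
move=> y /= hy i; have := le_lt_trans (coord_le_enorm (y - x) i) hy.
by rewrite !mxE ltr_norml => /andP[? ?]; apply/andP; split; lra.
Qed.

Lemma cube_sub_eball x rho : (0 < n)%N -> 0 < rho ->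
  box (x - const_mx (rho / (2 * n%:R))) (x + const_mx (rho / (2 * n%:R))) `<=` eball x rho.
Proof.
move=> n0 rho0; set c := rho / (2 * n%:R); move=> y /= hy.
have n1 : 1 <= (n%:R : R) by rewrite ler1n.
have cn : c * (2 * n%:R) = rho by rewrite /c divfK // gt_eqF //; lra.
apply: (@enorm_lt_coord _ c) => // [i|]; last by nra.
have /andP[] := hy i; rewrite !mxE => ? ?.
by rewrite ler_norml; apply/andP; split; lra.
Qed.

Lemma eball_vol_bounds (mu : {measure set (Rn R n) -> \bar R}) x rho :
  is_lebesgue mu -> (0 < n)%N -> 0 < rho ->
  (rho / n%:R) ^+ n <= vol mu (eball x rho) <= (2 * rho) ^+ n.
Proof.
move=> hL n0 rho0.
have mB := measurable_eball x rho.
have up : (mu (eball x rho) <= ((2 * rho) ^+ n)%:E)%E.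
  rewrite -(@lebesgue_cube mu x _ hL (ltW rho0)).
  by apply: le_measure; rewrite ?inE //; [exact: measurable_box | exact: eball_sub_cube].
have lo : (((rho / n%:R) ^+ n)%:E <= mu (eball x rho))%E.
  have -> : rho / n%:R = 2 * (rho / (2 * n%:R)).
    by field; rewrite pnatr_eq0 -lt0n.
  rewrite -(@lebesgue_cube mu x _ hL); last by rewrite divr_ge0 ?mulr_ge0 ?ler0n ?ltW.
  by apply: le_measure; rewrite ?inE //; [exact: measurable_box | exact: cube_sub_eball].
have fin : mu (eball x rho) \is a fin_num.
  by rewrite ge0_fin_numE ?measure_ge0 //; exact: le_lt_trans up (ltry _).
by rewrite -!lee_fin /vol fineK // lo up.
Qed.

End Euclidean.

Lemma powR_exprn_inv {R : realType} (n : nat) (a : R) : (0 < n)%N -> 0 <= a ->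
  (a ^+ n) `^ n%:R^-1 = a.
Proof.
move=> n0 a0; rewrite -powR_mulrn // -powRrM mulfV ?powRr1 //.
by rewrite pnatr_eq0 -lt0n.
Qed.

Lemma eball_side_bounds {R : realType} {n : nat} (mu : {measure set (Rn R n) -> \bar R})
    (x : 'rV[R]_n) (rho : R) : is_lebesgue mu -> (0 < n)%N -> 0 < rho ->
  let s := vol mu (eball x rho) `^ n%:R^-1 in
  [/\ 0 < vol mu (eball x rho), rho <= n%:R * s & s <= 2 * rho].
Proof.
move=> hL n0 rho0 s; have /andP[Vlo Vhi] := eball_vol_bounds mu x rho hL n0 rho0.
have N0 : 0 < n%:R :> R by rewrite ltr0n.
have V0 : 0 < vol mu (eball x rho) by apply: lt_le_trans Vlo; rewrite exprn_gt0 // divr_gt0.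
have le_side a : 0 <= a -> a ^+ n <= vol mu (eball x rho) -> a <= s.
  move=> a0 aV; rewrite -(powR_exprn_inv _ _ n0 a0).
  apply: ge0_ler_powR => //; rewrite ?nnegrE ?invr_ge0 ?ler0n ?exprn_ge0 //.
  exact: ltW.
split => //; last first.
  have rho2 : 0 <= 2 * rho by rewrite mulr_ge0 ?ltW.
  rewrite -(powR_exprn_inv _ _ n0 rho2).
  apply: ge0_ler_powR => //; rewrite ?nnegrE ?invr_ge0 ?ler0n ?exprn_ge0 //.
  exact: ltW.
by rewrite -ler_pdivrMl // mulrC le_side // divr_ge0 ?ltW.
Qed.

Lemma ler_div_powR_scale {R : realType} {v a b k e : R} :
  0 <= v -> 0 <= e -> 0 < a -> 0 < b -> 0 <= k -> a <= k * b ->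
  v / b `^ e <= k `^ e * (v / a `^ e).
Proof.
move=> v0 e0 a0 b0 k0 akb; rewrite mulrCA ler_wpM2l // ler_pdivlMr ?powR_gt0 //.
rewrite mulrC ler_pdivrMr ?powR_gt0 // -powRM ?(ltW b0) //.
apply: ge0_ler_powR => //; rewrite nnegrE ?mulr_ge0 //; exact: ltW.
Qed.

Lemma ler_div_powR {R : realType} {v a b e : R} :
  0 <= v -> 0 <= e -> 0 < a -> a <= b -> v / b `^ e <= v / a `^ e.
Proof.
move=> v0 e0 a0 ab.
by have := ler_div_powR_scale v0 e0 a0 (lt_le_trans a0 ab) ler01; rewrite powR1 !mul1r; apply.
Qed.

Section ball_decomposition.
Context {R : realType} {n : nat} {mu : {measure set (Rn R n) -> \bar R}}.
Context {p : \bar R} {v : Rn R n -> R} {xB : 'rV[R]_n} {rho s e : R}.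
Hypotheses (p1 : (1 <= p)%E) (v0 : forall y, 0 <= v y) (mv : measurable_fun setT v).
Hypotheses (rho0 : 0 < rho) (e0 : 0 <= e) (s0 : 0 < s).
Hypotheses (rho_le_ns : rho <= n%:R * s) (s_le_2rho : s <= 2 * rho).

Local Notation B := (eball xB rho).
Local Notation dist y := (enorm ((y : 'rV[R]_n) - xB)).
Local Notation kernel := (fun y : Rn R n => v y / (s + dist y) `^ e).
Local Notation inner := (fun y : Rn R n => \1_B y * v y).
Local Notation outer :=
  (fun y : Rn R n => \1_(~` B) y * (v y / enorm (xB - (y : 'rV[R]_n)) `^ e)).

Let measurable_kernel : measurable_fun setT kernel.
Proof.
under eq_fun do rewrite -powRN.
apply: measurable_funM => //; apply: (measurableT_comp (measurable_powR _)).
by apply: measurable_funD => //; exact: measurable_enorm_dist.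
Qed.

Let measurable_inner : measurable_fun setT inner.
Proof. by apply: measurable_funM => //; exact: measurable_indic (measurable_eball xB rho). Qed.

Let measurable_outer : measurable_fun setT outer.
Proof.
under eq_fun do rewrite enorm_distC -powRN.
apply: measurable_funM; first exact: measurable_indic (measurableC (measurable_eball xB rho)).
apply: measurable_funM => //; apply: (measurableT_comp (measurable_powR _)).
exact: measurable_enorm_dist.
Qed.

Let dist_gt0 y : 0 < s + dist y.
Proof. by rewrite ltr_wpDr ?enorm_ge0. Qed.

Let inside_eball y : y \in B -> dist y < rho.
Proof. by rewrite inE. Qed.

Let outside_eball y : y \notin B -> rho <= dist y.
Proof. by rewrite notin_setE /= => /negP; rewrite -leNgt. Qed.

Lemma Lnorm_inner_le : (Lnorm mu p (EFin \o inner) <=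
  (((1 + n%:R) * s) `^ e)%:E * Lnorm mu p (EFin \o kernel))%E.
Proof.
rewrite -ge0_LnormZl ?powR_ge0 //; apply: le_Lnorm => //.
  exact/measurable_funM.
move=> y; rewrite !ger0_norm ?mulr_ge0 ?divr_ge0 ?invr_ge0 ?powR_ge0 ?indicE //.
have [/inside_eball yB|_] := boolP (y \in B); last by rewrite mul0r mulr_ge0 ?divr_ge0 ?powR_ge0.
have k0 : 0 <= (1 + n%:R) * s by rewrite mulr_ge0 ?addr_ge0 ?ler0n // ltW.
have dist_le : s + dist y <= (1 + n%:R) * s * 1.
  by rewrite mulr1 mulrDl mul1r lerD2l ltW // (lt_le_trans yB).
by have := ler_div_powR_scale (v0 y) e0 (dist_gt0 y) ltr01 k0 dist_le; rewrite powR1 divr1 mul1r.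
Qed.

Lemma Lnorm_outer_le :
  (Lnorm mu p (EFin \o outer) <= (3 `^ e)%:E * Lnorm mu p (EFin \o kernel))%E.
Proof.
rewrite -ge0_LnormZl ?powR_ge0 //; apply: le_Lnorm => //.
  exact/measurable_funM.
move=> y; rewrite !ger0_norm ?mulr_ge0 ?divr_ge0 ?invr_ge0 ?powR_ge0 ?indicE //.
rewrite in_setC; have [yB|/outside_eball yB] := boolP (y \in B).
  by rewrite mul0r mulr_ge0 ?divr_ge0 ?powR_ge0.
rewrite mul1r enorm_distC; apply: ler_div_powR_scale => //; first exact: lt_le_trans yB.
by have := s_le_2rho; move: yB; set t := enorm _; lra.
Qed.

Lemma Lnorm_kernel_le : (Lnorm mu p (EFin \o kernel) <=
  ((s `^ e)^-1)%:E * Lnorm mu p (EFin \o inner) + Lnorm mu p (EFin \o outer))%E.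
Proof.
rewrite -ge0_LnormZl ?invr_ge0 ?powR_ge0 //.
have mi : measurable_fun setT (fun y => (s `^ e)^-1 * inner y) by exact/measurable_funM.
apply: le_trans (eminkowski mu mi measurable_outer p1).
apply: le_Lnorm => //; first exact: measurable_funD.
move=> y /=; rewrite !ger0_norm ?addr_ge0 ?mulr_ge0 ?divr_ge0 ?invr_ge0 ?powR_ge0 ?indicE //.
rewrite in_setC; have [yB|/outside_eball yB] := boolP (y \in B) => /=.
  by rewrite mul1r mul0r addr0 [leRHS]mulrC ler_div_powR // lerDl enorm_ge0.
rewrite mul0r mulr0 add0r mul1r [enorm (xB - _)]enorm_distC ler_div_powR ?(lt_le_trans rho0) //.
by rewrite lerDr ltW.
Qed.

End ball_decomposition.

Lemma conj_exp_ge1 {R : realType} {r : \bar R} : (1 <= r)%E -> (1 <= conj_exp r)%E.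
Proof.
case: r => [x| |] //= x1; case: ifPn => [_|x1']; first exact: leey.
rewrite lee_fin in x1; have x1s : 1 < x by rewrite lt_neqAle eq_sym x1' x1.
by rewrite lee_fin ler_pdivlMr ?subr_gt0 //; lra.
Qed.

Lemma inv_expD_conj {R : realType} {r : \bar R} :
  (1 <= r)%E -> inv_exp r + inv_exp (conj_exp r) = 1.
Proof.
case: r => [x| |] //= x1; last by rewrite invr1 add0r.
case: ifPn => [/eqP ->|x1']; first by rewrite invr1 addr0.
rewrite lee_fin in x1; have x1s : 1 < x by rewrite lt_neqAle eq_sym x1' x1.
by rewrite /= invf_div; field; rewrite gt_eqF // (lt_trans ltr01 x1s).
Qed.

Lemma powR_local_factorE {R : realType} {V N alt dt delta q q' : R} :
  0 < V -> 0 < N -> q + q' = 1 ->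
  V `^ ((alt - dt) / N - q) * V `^ (- q') =
  V `^ ((delta - dt) / N) * ((V `^ N^-1) `^ (N - alt + delta))^-1.
Proof.
move=> V0 N0 qq'; rewrite -powRrM -powRN -!powRD ?(gt_eqF V0) ?implybT //.
by congr (V `^ _); rewrite (_ : q' = 1 - q); [field; rewrite gt_eqF | lra].
Qed.

Lemma ratio_bound_exponent_gt0 {R : realType} (n m : nat) (alpha delta : R) :
  alpha < n%:R -> 0 < delta -> (delta%:E < ratio_bound n alpha m)%E ->
  0 < n%:R - (m%:R * delta + alpha) + delta.
Proof.
rewrite /ratio_bound; case: eqP => [-> an d0 _|/eqP m0 an d0]; first by rewrite mul0r; lra.
by rewrite lte_fin ltr_pdivlMr ?ltr0n ?lt0n //; lra.
Qed.

Lemma wavg_eball_fin_num {R : realType} {n : nat} {mu : {measure set (Rn R n) -> \bar R}}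
    {w : Rn R n -> R} {rho : R} :
  weight mu w -> 0 < rho -> forall x, wavg mu w (eball x rho) \is a fin_num.
Proof.
case=> _ [_ iw] rho0 x; rewrite /wavg fin_numM //.
by apply: integrable_fin_num; [exact: measurable_eball | exact: iw].
Qed.

Lemma lee_pmul_bound {R : realType} {X Y : \bar R} {k K C : R} :
  0 <= k -> k <= K -> (0 <= X)%E -> (X <= C%:E * Y)%E -> (k%:E * X <= (K * C)%:E * Y)%E.
Proof.
move=> k0 kK X0 XY; rewrite EFinM -muleA.
apply: le_trans (lee_wpmul2r X0 (_ : k%:E <= K%:E)%E) _; first by rewrite lee_fin.
by apply: lee_wpmul2l; rewrite // lee_fin (le_trans k0).
Qed.

Section local_global.
Context {R : realType} {n : nat} (mu : {measure set (Rn R n) -> \bar R}).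
Variables (r : \bar R) (alt dt delta : R) (w v : Rn R n -> R).
Hypotheses (hL : is_lebesgue mu) (n0 : (0 < n)%N) (r1 : (1 <= r)%E).
Hypotheses (e0 : 0 <= n%:R - alt + delta) (hw : weight mu w) (hv : weight mu v).

Local Notation e := (n%:R - alt + delta).
Local Notation p := (conj_exp r).

Let p1 : (1 <= p)%E. Proof. exact: conj_exp_ge1. Qed.
Let v0 : forall y, 0 <= v y. Proof. by case: hv. Qed.
Let mv : measurable_fun setT v. Proof. by case: hv => _ []. Qed.

Lemma inH_local_global : inH mu r alt dt delta w v ->
  exists C, forall xB rho, 0 < rho ->
    local_cond mu r alt dt w v C xB rho /\ global_cond mu r alt dt delta w v C xB rho.
Proof.
case=> C HC; exists (((1 + n%:R) `^ e + 3 `^ e) * C) => xB rho rho0.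
have [V0 rho_le s_le] := eball_side_bounds mu xB rho hL n0 rho0.
have := HC xB rho rho0; rewrite /local_cond /global_cond /=.
set V := vol mu (eball xB rho); set s := V `^ n%:R^-1; set H := Lnorm mu p _ => HB.
have s0 : 0 < s by rewrite powR_gt0.
have VH0 : (0 <= (V `^ ((delta - dt) / n%:R))%:E * H)%E.
  by rewrite mule_ge0 ?lee_fin ?powR_ge0 ?Lnorm_ge0.
have n_gt0 : 0 < n%:R :> R by rewrite ltr0n.
split.
- rewrite muleA -EFinM (powR_local_factorE (delta:=delta) V0 n_gt0 (inv_expD_conj r1)).
  apply: le_trans (lee_wpmul2l _ (Lnorm_inner_le p1 v0 mv e0 s0 rho_le)) _.
    by rewrite lee_fin mulr_ge0 ?invr_ge0 ?powR_ge0.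
  rewrite muleA -EFinM.
  have -> : V `^ ((delta - dt) / n%:R) * (s `^ e)^-1 * ((1 + n%:R) * s) `^ e =
      (1 + n%:R) `^ e * V `^ ((delta - dt) / n%:R).
    by rewrite powRM ?addr_ge0 ?ler0n ?(ltW s0) //; field; rewrite gt_eqF // powR_gt0.
  rewrite EFinM -muleA; apply: (lee_pmul_bound _ _ VH0 HB); first exact: powR_ge0.
  by rewrite lerDl powR_ge0.
- apply: le_trans (lee_wpmul2l _ (Lnorm_outer_le p1 v0 mv rho0 e0 s0 s_le)) _.
    by rewrite lee_fin powR_ge0.
  rewrite muleCA; apply: (lee_pmul_bound _ _ VH0 HB); first exact: powR_ge0.
  by rewrite lerDr powR_ge0.
Qed.

Lemma local_global_inH : (exists C, forall xB rho, 0 < rho ->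
    local_cond mu r alt dt w v C xB rho /\ global_cond mu r alt dt delta w v C xB rho) ->
  inH mu r alt dt delta w v.
Proof.
case=> C HC; exists (C + C) => xB rho rho0.
have [V0 rho_le s_le] := eball_side_bounds mu xB rho hL n0 rho0.
have [] := HC xB rho rho0; rewrite /local_cond /global_cond /=.
set V := vol mu (eball xB rho); set s := V `^ n%:R^-1 => HL HG.
have s0 : 0 < s by rewrite powR_gt0.
have n_gt0 : 0 < n%:R :> R by rewrite ltr0n.
apply: le_trans (lee_wpmul2l _ (Lnorm_kernel_le p1 v0 mv rho0 e0 s0)) _.
  by rewrite lee_fin powR_ge0.
rewrite ge0_muleDr ?mule_ge0 ?lee_fin ?invr_ge0 ?powR_ge0 ?Lnorm_ge0 //.
rewrite muleA -EFinM -(powR_local_factorE V0 n_gt0 (inv_expD_conj r1)) EFinM -muleA.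
apply: le_trans (leeD HL HG) _.
by rewrite -(fineK (wavg_eball_fin_num hw rho0 xB)) -!EFinM -EFinD mulrDl.
Qed.

End local_global.

Theorem lemma3p4 (R : realType) (n m : nat) (alpha eta delta dt : R) (r : \bar R)
    (mu : {measure set (Rn R n) -> \bar R}) (w v : Rn R n -> R) :
  is_lebesgue mu ->
  0 <= alpha -> alpha < n%:R ->
  0 < eta -> eta <= 1 ->
  0 < delta -> (delta%:E < Order.min eta%:E (ratio_bound n alpha m))%E ->
  (1 <= r)%E ->
  dt <= delta ->
  weight mu w -> weight mu v ->
  (inH mu r (m%:R * delta + alpha) dt delta w v <->
   exists C : R, forall (xB : 'rV[R]_n) (rho : R), 0 < rho ->
     local_cond mu r (m%:R * delta + alpha) dt w v C xB rho /\
     global_cond mu r (m%:R * delta + alpha) dt delta w v C xB rho).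
Proof.
move=> hL a0 an _ _ d0 dmin r1 _ hw hv.
have n0 : (0 < n)%N by rewrite -(ltr0n R); exact: le_lt_trans an.
have e0 : 0 <= n%:R - (m%:R * delta + alpha) + delta.
  by apply/ltW/ratio_bound_exponent_gt0 => //; move: dmin; rewrite lt_min => /andP[].
by split; [exact: inH_local_global | exact: local_global_inH].
Qed.
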